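(* Let $\mathbb{F}$ be an algebraically closed field with $\mathrm{char}\,\mathbb{F}=2$ and $n\ge2$. Let $\underline{a}=(e_1,e_2,0,\ldots,0)\in\mathbb{M}^n$ and let $\underline{b}\in\mathbb{M}^n$ be such that $\dim\mathrm{alg}(\underline{b})\le2$ and $f(\underline{a})=f(\underline{b})$ for all $f\in S_n^{(2)}$. Then ${\rm G}_2\underline{a}={\rm G}_2\underline{b}$.
   Context: The split octonion algebra $\mathbf{O}$ is the 8-dimensional $\mathbb{F}$-vector space of formal matrices $a=\begin{pmatrix}\alpha&\mathbf{u}\\ \mathbf{v}&\beta\end{pmatrix}$ with $\alpha,\beta\in\mathbb{F}$, $\mathbf{u},\mathbf{v}\in\mathbb{F}^3$, with multiplication $\begin{pmatrix}\alpha&\mathbf{u}\\ \mathbf{v}&\beta\end{pmatrix}\begin{pmatrix}\alpha'&\mathbf{u}'\\ \mathbf{v}'&\beta'\end{pmatrix}=\begin{pmatrix}\alpha\alpha'+\mathbf{u}\cdot\mathbf{v}'&\alpha\mathbf{u}'+\beta'\mathbf{u}-\mathbf{v}\times\mathbf{v}'\\ \alpha'\mathbf{v}+\beta\mathbf{v}'+\mathbf{u}\times\mathbf{u}'&\beta\beta'+\mathbf{v}\cdot\mathbf{u}'\end{pmatrix}$ (dot product and cross product on $\mathbb{F}^3$). Trace $\mathrm{tr}(a)=\alpha+\beta$, norm $n(a)=\alpha\beta-\mathbf{u}\cdot\mathbf{v}$. $e_1$ has $\alpha=1$ and all else $0$, $e_2$ has $\beta=1$ and all else $0$. $\mathbb{M}=\left\{\begin{pmatrix}\alpha&(\gamma,0,0)\\(\delta,0,0)&\beta\end{pmatrix}\right\}\subseteq\mathbf{O}$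 is the quaternion subalgebra. ${\rm G}_2=\mathrm{Aut}(\mathbf{O})$ acts diagonally on $\mathbf{O}^n$. For $\underline{b}\in\mathbf{O}^n$, $\mathrm{alg}(\underline{b})$ is the (non-unital) $\mathbb{F}$-subalgebra of $\mathbf{O}$ generated by $b_1,\ldots,b_n$. $S_n^{(2)}$ is the set of functions on $\mathbf{O}^n$: $\underline{a}\mapsto n(a_i)$, $\underline{a}\mapsto\mathrm{tr}(a_i)$ ($1\le i\le n$), and $\underline{a}\mapsto\mathrm{tr}(a_ia_j)$ ($1\le i<j\le n$). *)

(* Split octonions over a field F, encoded as row vectors
   of length 8 with coordinates (alpha, u_1, u_2, u_3, v_1, v_2, v_3, beta). *)
From HB Require Import structures.
From mathcomp Require Import all_boot all_order all_algebra.
Set Implicit Arguments. Unset Strict Implicit. Unset Printing Implicit Defensive.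
Import Order.TTheory GRing.Theory Num.Theory.
Local Open Scope ring_scope.

Section Octonions.
Variable F : fieldType.

Definition oct := 'rV[F]_8.

Definition oalpha (x : oct) : F := x 0 (inord 0).
Definition obeta (x : oct) : F := x 0 (inord 7).
Definition ou (x : oct) : 'rV[F]_3 := \row_(k < 3) x 0 (inord k.+1).
Definition ov (x : oct) : 'rV[F]_3 := \row_(k < 3) x 0 (inord k.+4).

Definition mkoct (al : F) (u v : 'rV[F]_3) (be : F) : oct :=
  \row_(i < 8) (if (i : nat) == 0%N then al
                else if (i < 4)%N then u 0 (inord i.-1)
                else if (i < 7)%N then v 0 (inord (i - 4))
                else be).

Definition dot3 (u w : 'rV[F]_3) : F := \sum_(k < 3) u 0 k * w 0 k.

Definition cross3 (u w : 'rV[F]_3) : 'rV[F]_3 :=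
  \row_(k < 3) (u 0 (inord (k.+1 %% 3)) * w 0 (inord (k.+2 %% 3))
              - u 0 (inord (k.+2 %% 3)) * w 0 (inord (k.+1 %% 3))).

(* Zorn vector-matrix multiplication *)
Definition omul (a b : oct) : oct :=
  let al := oalpha a in let be := obeta a in let u := ou a in let v := ov a in
  let al' := oalpha b in let be' := obeta b in let u' := ou b in let v' := ov b in
  mkoct (al * al' + dot3 u v')
        (al *: u' + be' *: u - cross3 v v')
        (al' *: v + be *: v' + cross3 u u')
        (be * be' + dot3 v u').

Definition otr (a : oct) : F := oalpha a + obeta a.
Definition onorm (a : oct) : F := oalpha a * obeta a - dot3 (ou a) (ov a).

Definition oe1 : oct := mkoct 1 0 0 0.
Definition oe2 : oct := mkoct 0 0 0 1.

(* the quaternion subalgebra M *)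
Definition inM (a : oct) : Prop :=
  ou a 0 (inord 1) = 0 /\ ou a 0 (inord 2) = 0 /\
  ov a 0 (inord 1) = 0 /\ ov a 0 (inord 2) = 0.

(* G2 = Aut(O): F-linear bijective multiplicative maps, as matrices acting
   on row vectors x |-> x *m g *)
Definition isG2 (g : 'M[F]_8) : Prop :=
  g \in unitmx /\ forall x y : oct, omul x y *m g = omul (x *m g) (y *m g).

Definition in_G2orbit n (a : 'I_n -> oct) (c : 'I_n -> oct) : Prop :=
  exists g, isG2 g /\ forall i, c i = a i *m g.

(* subspaces of O are represented by matrices (row spaces, mxalgebra) *)
Definition mul_closed (U : 'M[F]_8) : Prop :=
  forall x y : oct, (x <= U)%MS -> (y <= U)%MS -> (omul x y <= U)%MS.

Definition is_alg n (b : 'I_n -> oct) (A : 'M[F]_8) : Prop :=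
  [/\ forall i, (b i <= A)%MS, mul_closed A &
      forall U : 'M[F]_8, (forall i, (b i <= U)%MS) -> mul_closed U -> (A <= U)%MS].

(* f(a) = f(b) for all f in S_n^(2) *)
Definition same_S2 n (a b : 'I_n -> oct) : Prop :=
  (forall i, onorm (a i) = onorm (b i)) /\
  (forall i, otr (a i) = otr (b i)) /\
  (forall i j : 'I_n, (i < j)%N -> otr (omul (a i) (a j)) = otr (omul (b i) (b j))).

End Octonions.

Definition a_e1e2 (F : fieldType) n : 'I_n -> oct F :=
  fun i => if (i : nat) == 0%N then oe1 F else if (i : nat) == 1%N then oe2 F else 0.
Arguments a_e1e2 : clear implicits.

From HB Require Import structures.
From mathcomp Require Import all_boot all_order all_algebra.
From mathcomp Require Import ring.
Set Implicit Arguments. Unset Strict Implicit. Unset Printing Implicit Defensive.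
Import GRing.Theory.
Local Open Scope ring_scope.

(* Put X = b_1 and Y = b_2. The invariants say tr X = tr Y = 1, n(X) = n(Y) = 0
   and tr(XY) = 0, so X and Y are idempotents (x^2 = tr(x) x - n(x) 1), and on
   span(X, Y) the forms x |-> tr(Xx) and x |-> tr x read off the coordinates.
   Hence X, Y are independent, span alg(b), and any element of alg(b) killed by
   both forms vanishes: this gives b_i = 0 for i >= 3, and XY = YX = 0 because
   tr(X(XY)) = tr(X^2 Y) = tr(XY) by alternativity (symmetrically for YX).
   Then w = X + Y satisfies w = w^2 = 2w - n(w) 1, so w = n(w) 1, and
   X = Xw = n(w) X forces w = 1.
   Finally X is a rank-one idempotent of M = M_2(F), conjugate to e_1 by some
   P in GL_2(F); conjugation by P extends to an automorphism of O mapping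
   (e_1, e_2) to (X, 1 - X) = (b_1, b_2). *)

Section Coordinates.
Variable F : fieldType.
Implicit Types (x : oct F) (k : F).

Definition vec8 (x0 x1 x2 x3 x4 x5 x6 x7 : F) : oct F :=
  \row_(i < 8) nth 0 [:: x0; x1; x2; x3; x4; x5; x6; x7] i.

Lemma oct_vec8 x :
  x = vec8 (x 0 (inord 0)) (x 0 (inord 1)) (x 0 (inord 2)) (x 0 (inord 3))
           (x 0 (inord 4)) (x 0 (inord 5)) (x 0 (inord 6)) (x 0 (inord 7)).
Proof.
apply/rowP => -[[|[|[|[|[|[|[|[|//]]]]]]]] lt_i8];
  by rewrite mxE; congr (x 0 _); apply/val_inj; rewrite /= inordK.
Qed.

Lemma vec8_eq (x0 x1 x2 x3 x4 x5 x6 x7 y0 y1 y2 y3 y4 y5 y6 y7 : F) :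
  x0 = y0 -> x1 = y1 -> x2 = y2 -> x3 = y3 -> x4 = y4 -> x5 = y5 -> x6 = y6 -> x7 = y7 ->
  vec8 x0 x1 x2 x3 x4 x5 x6 x7 = vec8 y0 y1 y2 y3 y4 y5 y6 y7.
Proof. by move=> -> -> -> -> -> -> -> ->. Qed.

Lemma add_vec8 (x0 x1 x2 x3 x4 x5 x6 x7 y0 y1 y2 y3 y4 y5 y6 y7 : F) :
  vec8 x0 x1 x2 x3 x4 x5 x6 x7 + vec8 y0 y1 y2 y3 y4 y5 y6 y7 =
  vec8 (x0 + y0) (x1 + y1) (x2 + y2) (x3 + y3) (x4 + y4) (x5 + y5) (x6 + y6) (x7 + y7).
Proof. by apply/rowP => -[[|[|[|[|[|[|[|[|//]]]]]]]] ?]; rewrite !mxE. Qed.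

Lemma opp_vec8 (x0 x1 x2 x3 x4 x5 x6 x7 : F) :
  - vec8 x0 x1 x2 x3 x4 x5 x6 x7 = vec8 (- x0) (- x1) (- x2) (- x3) (- x4) (- x5) (- x6) (- x7).
Proof. by apply/rowP => -[[|[|[|[|[|[|[|[|//]]]]]]]] ?]; rewrite !mxE. Qed.

Lemma scale_vec8 k (x0 x1 x2 x3 x4 x5 x6 x7 : F) :
  k *: vec8 x0 x1 x2 x3 x4 x5 x6 x7 =
  vec8 (k * x0) (k * x1) (k * x2) (k * x3) (k * x4) (k * x5) (k * x6) (k * x7).
Proof. by apply/rowP => -[[|[|[|[|[|[|[|[|//]]]]]]]] ?]; rewrite !mxE. Qed.

Lemma omul_vec8 (x0 x1 x2 x3 x4 x5 x6 x7 y0 y1 y2 y3 y4 y5 y6 y7 : F) :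
  omul (vec8 x0 x1 x2 x3 x4 x5 x6 x7) (vec8 y0 y1 y2 y3 y4 y5 y6 y7) =
  vec8 (x0 * y0 + (x1 * y4 + x2 * y5 + x3 * y6))
       (x0 * y1 + y7 * x1 - (x5 * y6 - x6 * y5))
       (x0 * y2 + y7 * x2 - (x6 * y4 - x4 * y6))
       (x0 * y3 + y7 * x3 - (x4 * y5 - x5 * y4))
       (y0 * x4 + x7 * y4 + (x2 * y3 - x3 * y2))
       (y0 * x5 + x7 * y5 + (x3 * y1 - x1 * y3))
       (y0 * x6 + x7 * y6 + (x1 * y2 - x2 * y1))
       (x7 * y7 + (x4 * y1 + x5 * y2 + x6 * y3)).
Proof.
apply/rowP => i; rewrite /omul /mkoct /oalpha /obeta /ou /ov /dot3 /cross3 !mxE.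
case: i => [[|[|[|[|[|[|[|[|//]]]]]]]] ?] /=;
  rewrite ?big_ord_recl ?big_ord0 ?mxE /= ?inordK //= ?mxE /= ?inordK //=; ring.
Qed.

Lemma otr_vec8 (x0 x1 x2 x3 x4 x5 x6 x7 : F) : otr (vec8 x0 x1 x2 x3 x4 x5 x6 x7) = x0 + x7.
Proof. by rewrite /otr /oalpha /obeta !mxE !inordK. Qed.

Lemma onorm_vec8 (x0 x1 x2 x3 x4 x5 x6 x7 : F) :
  onorm (vec8 x0 x1 x2 x3 x4 x5 x6 x7) = x0 * x7 - (x1 * x4 + x2 * x5 + x3 * x6).
Proof.
rewrite /onorm /oalpha /obeta /ou /ov /dot3 !big_ord_recl big_ord0 !mxE /=.
by rewrite ?inordK //= ?mxE ?inordK //= addr0 addrA.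
Qed.

Lemma oe1_vec8 : oe1 F = vec8 1 0 0 0 0 0 0 0.
Proof. by apply/rowP => -[[|[|[|[|[|[|[|[|//]]]]]]]] ?]; rewrite !mxE. Qed.

Lemma oe2_vec8 : oe2 F = vec8 0 0 0 0 0 0 0 1.
Proof. by apply/rowP => -[[|[|[|[|[|[|[|[|//]]]]]]]] ?]; rewrite !mxE. Qed.

Lemma inM_vec8 x : inM x -> exists al ga de be, x = vec8 al ga 0 0 de 0 0 be.
Proof.
rewrite /inM /ou /ov !mxE !inordK // => -[u2 [u3 [v2 v3]]].
by rewrite [x]oct_vec8 u2 u3 v2 v3; do 4 eexists.
Qed.

End Coordinates.

Ltac oct_ring :=
  rewrite ?(omul_vec8, add_vec8, opp_vec8, scale_vec8, otr_vec8, onorm_vec8);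
  first [apply: vec8_eq; ring | ring].

Section OctonionAlgebra.
Variable F : fieldType.
Implicit Types (x y z : oct F) (k : F).

Definition oone : oct F := vec8 1 0 0 0 0 0 0 1.

Lemma omulDl x y z : omul (x + y) z = omul x z + omul y z.
Proof. by rewrite [x]oct_vec8 [y]oct_vec8 [z]oct_vec8; oct_ring. Qed.

Lemma omulDr x y z : omul x (y + z) = omul x y + omul x z.
Proof. by rewrite [x]oct_vec8 [y]oct_vec8 [z]oct_vec8; oct_ring. Qed.

Lemma omulZr k x y : omul x (k *: y) = k *: omul x y.
Proof. by rewrite [x]oct_vec8 [y]oct_vec8; oct_ring. Qed.

Lemma omul1r x : omul x oone = x.
Proof. by rewrite [x]oct_vec8; oct_ring. Qed.

Lemma omul_alternative x y : omul (omul x x) y = omul x (omul x y).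
Proof. by rewrite [x]oct_vec8 [y]oct_vec8; oct_ring. Qed.

Lemma omul_sqr x : omul x x = otr x *: x - onorm x *: oone.
Proof. by rewrite [x]oct_vec8; oct_ring. Qed.

Lemma otrD x y : otr (x + y) = otr x + otr y.
Proof. by rewrite [x]oct_vec8 [y]oct_vec8; oct_ring. Qed.

Lemma otrZ k x : otr (k *: x) = k * otr x.
Proof. by rewrite [x]oct_vec8; oct_ring. Qed.

Lemma omulr0 x : omul x 0 = 0.
Proof. by rewrite -(scale0r (0 : oct F)) omulZr !scale0r. Qed.

Lemma otr0 : otr (0 : oct F) = 0.
Proof. by rewrite -(scale0r 0) otrZ mul0r. Qed.

Lemma otr_omulC x y : otr (omul x y) = otr (omul y x).
Proof. by rewrite [x]oct_vec8 [y]oct_vec8; oct_ring. Qed.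

Lemma omul_idem x : otr x = 1 -> onorm x = 0 -> omul x x = x.
Proof. by move=> tr_x n_x; rewrite omul_sqr tr_x n_x scale1r scale0r subr0. Qed.

Lemma oe1_oe2_invariants :
  [/\ otr (oe1 F) = 1, onorm (oe1 F) = 0, otr (oe2 F) = 1, onorm (oe2 F) = 0
    & otr (omul (oe1 F) (oe2 F)) = 0].
Proof. by rewrite oe1_vec8 oe2_vec8; split; oct_ring. Qed.

End OctonionAlgebra.

Section GL2.
Variable F : fieldType.
Variables p11 p12 p21 p22 : F.

(* On M = [[x0, x1], [x4, x7]] this is conjugation by P = [[p11, p12], [p21, p22]];
   the row vectors (x2, x6) and (x5, x3) are multiplied on the right by P^-1 and P. *)
Definition gl2_vec8 (x0 x1 x2 x3 x4 x5 x6 x7 : F) : oct F :=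
  let e := (p11 * p22 - p12 * p21)^-1 in
  vec8 (e * ((p11 * x0 + p12 * x4) * p22 - (p11 * x1 + p12 * x7) * p21))
       (e * (- (p11 * x0 + p12 * x4) * p12 + (p11 * x1 + p12 * x7) * p11))
       (e * (p22 * x2 - p21 * x6))
       (p22 * x3 + p21 * x5)
       (e * ((p21 * x0 + p22 * x4) * p22 - (p21 * x1 + p22 * x7) * p21))
       (p12 * x3 + p11 * x5)
       (e * (- p12 * x2 + p11 * x6))
       (e * (- (p21 * x0 + p22 * x4) * p12 + (p21 * x1 + p22 * x7) * p11)).

Definition gl2_mx : 'M[F]_8 :=
  \matrix_(i < 8, j < 8)
    let d k := ((i : nat) == k)%:R in gl2_vec8 (d 0) (d 1) (d 2) (d 3) (d 4) (d 5) (d 6) (d 7) 0 j.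

Lemma mul_gl2_mx (x0 x1 x2 x3 x4 x5 x6 x7 : F) :
  vec8 x0 x1 x2 x3 x4 x5 x6 x7 *m gl2_mx = gl2_vec8 x0 x1 x2 x3 x4 x5 x6 x7.
Proof.
apply/rowP => j; rewrite !mxE !big_ord_recl big_ord0 !mxE /gl2_vec8 !mxE /=.
by case: j => [[|[|[|[|[|[|[|[|//]]]]]]]] ?] /=; ring.
Qed.

Hypothesis detP : p11 * p22 - p12 * p21 != 0.

Lemma gl2_vec8_omul (x0 x1 x2 x3 x4 x5 x6 x7 y0 y1 y2 y3 y4 y5 y6 y7 : F) :
  gl2_vec8 (x0 * y0 + (x1 * y4 + x2 * y5 + x3 * y6))
           (x0 * y1 + y7 * x1 - (x5 * y6 - x6 * y5))
           (x0 * y2 + y7 * x2 - (x6 * y4 - x4 * y6))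
           (x0 * y3 + y7 * x3 - (x4 * y5 - x5 * y4))
           (y0 * x4 + x7 * y4 + (x2 * y3 - x3 * y2))
           (y0 * x5 + x7 * y5 + (x3 * y1 - x1 * y3))
           (y0 * x6 + x7 * y6 + (x1 * y2 - x2 * y1))
           (x7 * y7 + (x4 * y1 + x5 * y2 + x6 * y3))
  = omul (gl2_vec8 x0 x1 x2 x3 x4 x5 x6 x7) (gl2_vec8 y0 y1 y2 y3 y4 y5 y6 y7).
Proof. by rewrite omul_vec8; apply: vec8_eq; field. Qed.

End GL2.

Section G2.
Variable F : fieldType.

Lemma gl2_mx_G2 (p11 p12 p21 p22 : F) :
  p11 * p22 - p12 * p21 != 0 -> isG2 (gl2_mx p11 p12 p21 p22).
Proof.
move=> detP; split; last first.
  by move=> x y; rewrite [x]oct_vec8 [y]oct_vec8 omul_vec8 !mul_gl2_mx gl2_vec8_omul.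
pose e := (p11 * p22 - p12 * p21)^-1.
suff /mulmx1_unit[] : gl2_mx p11 p12 p21 p22 *m gl2_mx (e * p22) (- (e * p12)) (- (e * p21)) (e * p11) = 1%:M by [].
apply/mul_rVP => x; rewrite mulmx1 [x]oct_vec8 mulmxA !mul_gl2_mx.
by apply: vec8_eq; rewrite /e; field.
Qed.

Lemma isG2_mul (g h : 'M[F]_8) : isG2 g -> isG2 h -> isG2 (g *m h).
Proof.
move=> [g_unit g_mul] [h_unit h_mul]; split; first by rewrite unitmx_mul g_unit h_unit.
by move=> x y; rewrite !mulmxA g_mul h_mul.
Qed.

Lemma isG2_inv (g : 'M[F]_8) : isG2 g -> isG2 (invmx g).
Proof.
move=> [g_unit g_mul]; split; first by rewrite unitmx_inv.
by move=> x y; rewrite -[in RHS](mulmxK g_unit (omul _ _)) g_mul !mulmxKV.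
Qed.

Lemma G2orbit_translate n (a b : 'I_n -> oct F) g :
  isG2 g -> (forall i, b i = a i *m g) ->
  forall c, in_G2orbit a c <-> in_G2orbit b c.
Proof.
move=> G2g bE c; split=> -[h [G2h cE]].
  exists (invmx g *m h); split; first by apply: isG2_mul => //; apply: isG2_inv.
  by move=> i; rewrite cE bE !mulmxA mulmxK //; case: G2g.
by exists (g *m h); split=> [|i]; [apply: isG2_mul | rewrite cE bE mulmxA].
Qed.

Lemma idempotent_inM_G2 (x : oct F) : inM x -> otr x = 1 -> onorm x = 0 ->
  exists2 g, isG2 g & oe1 F *m g = x /\ oe2 F *m g = oone F - x.
Proof.
case/inM_vec8 => al [ga [de [be ->]]]; rewrite otr_vec8 onorm_vec8 => tr1 n0.
have be_def : be = 1 - al by rewrite -tr1 addrC addKr.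
have gade : ga * de = al * (1 - al) by rewrite -be_def -[RHS]subr0 -n0; ring.
rewrite be_def oe1_vec8 oe2_vec8 /oone opp_vec8 add_vec8.
(* X = v w^T with w^T v = 1 is P e_1 P^-1 for P = [v | u], u orthogonal to w;
   take v = (al, de), u = (-ga, al) if al != 0 and v = (ga, 1), u = (-1, de) if al = 0. *)
have [al0 | al_neq0] := eqVneq al 0.
- rewrite al0 subr0 mul0r in gade *.
  exists (gl2_mx ga (- 1) 1 de).
    by apply: gl2_mx_G2; rewrite gade sub0r mulN1r opprK oner_eq0.
  rewrite !mul_gl2_mx /gl2_vec8; split; apply: vec8_eq; field: gade;
    by rewrite ?gade ?add0r ?oner_eq0.
- have detP : al * al - - ga * de != 0 by rewrite mulNr opprK gade -mulrDr addrC subrK mulr1.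
  exists (gl2_mx al (- ga) de al); first exact: gl2_mx_G2.
  by rewrite !mul_gl2_mx /gl2_vec8; split; apply: vec8_eq; field: gade; rewrite ?detP.
Qed.

End G2.

Lemma mul_rV_col_mx2 (F : fieldType) n (r : 'rV[F]_(1 + 1)) (x y : 'rV[F]_n) :
  r *m col_mx x y = r 0 0 *: x + r 0 1 *: y.
Proof.
rewrite -{1}[r]hsubmxK mul_row_col [lsubmx r]mx11_scalar [rsubmx r]mx11_scalar.
by rewrite !mul_scalar_mx !mxE; congr (r 0 _ *: x + r 0 _ *: y); apply: val_inj.
Qed.

Lemma rank2_span (F : fieldType) n m (x y : 'rV[F]_n) (A : 'M[F]_(m, n)) :
  (forall k0 k1, k0 *: x + k1 *: y = 0 -> k0 = 0 /\ k1 = 0) ->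
  (x <= A)%MS -> (y <= A)%MS -> (\rank A <= 2)%N ->
  forall z, (z <= A)%MS -> exists k0 k1, z = k0 *: x + k1 *: y.
Proof.
move=> xy_free xA yA rankA z zA.
have xyA : (col_mx x y <= A)%MS by rewrite col_mx_sub xA yA.
have rank_xy : \rank (col_mx x y) = 2.
  apply/eqP/inj_row_free => r; rewrite mul_rV_col_mx2 => /xy_free[r0 r1].
  by apply/rowP => -[[|[|//]] ?]; rewrite mxE; [rewrite -[RHS]r0 | rewrite -[RHS]r1];
     congr (r 0 _); apply: val_inj.
have Axy : (A <= col_mx x y)%MS by rewrite -(geq_leqif (mxrank_leqif_sup xyA)) rank_xy.
have /submxP[r ->] := submx_trans zA Axy.
by exists (r 0 0), (r 0 1); rewrite mul_rV_col_mx2.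
Qed.

Section IdempotentPair.
Variables (F : fieldType) (X Y : oct F).
Hypotheses (trX : otr X = 1) (nX : onorm X = 0) (trY : otr Y = 1) (trXY : otr (omul X Y) = 0).

Lemma otr_span k0 k1 : otr (k0 *: X + k1 *: Y) = k0 + k1.
Proof. by rewrite otrD !otrZ trX trY !mulr1. Qed.

Lemma otr_omul_span k0 k1 : otr (omul X (k0 *: X + k1 *: Y)) = k0.
Proof. by rewrite omulDr !omulZr otrD !otrZ omul_idem // trX trXY mulr1 mulr0 addr0. Qed.

Lemma span_free k0 k1 : k0 *: X + k1 *: Y = 0 -> k0 = 0 /\ k1 = 0.
Proof.
move=> xy0; have k00 : k0 = 0 by rewrite -(otr_omul_span k0 k1) xy0 omulr0 otr0.
by split=> //; move: (otr_span k0 k1); rewrite xy0 otr0 k00 add0r.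
Qed.

Variable A : 'M[F]_8.
Hypotheses (XA : (X <= A)%MS) (YA : (Y <= A)%MS) (rankA : (\rank A <= 2)%N).

Lemma span_otr_eq0 x : (x <= A)%MS -> otr (omul X x) = 0 -> otr x = 0 -> x = 0.
Proof.
move=> /(rank2_span span_free XA YA rankA)[k0 [k1 ->]].
by rewrite otr_omul_span otr_span => -> /eqP; rewrite add0r => /eqP->; rewrite !scale0r addr0.
Qed.

Lemma omul_pair_eq0 : mul_closed A -> omul X Y = 0.
Proof.
move=> mulA; apply: span_otr_eq0 => //; first exact: mulA.
by rewrite -omul_alternative omul_idem.
Qed.

End IdempotentPair.

Lemma idempotent_pair_sum (F : fieldType) (X Y : oct F) :
  otr X = 1 -> onorm X = 0 -> otr Y = 1 -> onorm Y = 0 ->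
  omul X Y = 0 -> omul Y X = 0 -> X + Y = oone F.
Proof.
move=> trX nX trY nY XY YX; set w := X + Y.
have ww : omul w w = w by rewrite omulDl !omulDr !omul_idem // XY YX addr0 add0r.
have w_scalar : w = onorm w *: oone F.
  have w2 : w = (1 + 1) *: w - onorm w *: oone F by rewrite -{1}ww omul_sqr otrD trX trY.
  apply/eqP; rewrite -subr_eq0; apply/eqP/(@addrI _ w).
  by rewrite addr0 addrA [RHS]w2 scalerDl scale1r.
have Xw : omul X w = X by rewrite omulDr XY addr0 omul_idem.
have n1 : onorm w = 1.
  by move: (congr1 (@otr F) Xw); rewrite {1}w_scalar omulZr omul1r otrZ trX mulr1.
by rewrite w_scalar n1 scale1r.
Qed.

Theorem lemma7p7 (F : closedFieldType) (Hchar : 2%N \in [pchar F])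
  (n : nat) (Hn : (2 <= n)%N) (b : 'I_n -> oct F)
  (HbM : forall i, inM (b i))
  (Halg : exists A : 'M[F]_8, is_alg b A /\ (\rank A <= 2)%N)
  (HS : same_S2 (a_e1e2 F n) b) :
  forall c : 'I_n -> oct F, in_G2orbit (a_e1e2 F n) c <-> in_G2orbit b c.
Proof.
case: HS => [HN [HT HP]]; case: Halg => A [[bA mulA _] rankA].
pose i0 := Ordinal (ltnW Hn); pose i1 := Ordinal Hn.
have [tr_e1 n_e1 tr_e2 n_e2 tr_e1e2] := oe1_oe2_invariants F.
have trX : otr (b i0) = 1 by rewrite -HT.
have nX : onorm (b i0) = 0 by rewrite -HN.
have trY : otr (b i1) = 1 by rewrite -HT.
have nY : onorm (b i1) = 0 by rewrite -HN.
have trXY : otr (omul (b i0) (b i1)) = 0 by rewrite -HP.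
have trYX : otr (omul (b i1) (b i0)) = 0 by rewrite otr_omulC.
have XY := omul_pair_eq0 trX nX trY trXY (bA i0) (bA i1) rankA mulA.
have YX := omul_pair_eq0 trY nY trX trYX (bA i1) (bA i0) rankA mulA.
have [g G2g [e1g e2g]] := idempotent_inM_G2 (HbM i0) trX nX.
apply: (G2orbit_translate G2g) => -[[|[|i]] lt_in] /=.
- by rewrite e1g; congr b; apply: val_inj.
- rewrite e2g -(idempotent_pair_sum trX nX trY nY XY YX) addrC addKr.
  by congr b; apply: val_inj.
- rewrite mul0mx; apply: (span_otr_eq0 trX nX trY trXY (bA i0) (bA i1) rankA (bA _)).
  + by rewrite -(HP i0) //= omulr0 otr0.
  + by rewrite -HT /= otr0.
Qed.
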